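(* Consider algorithm PredFL processing a demand $x$ with prediction $\hat f_x$ such that $d(x,\hat f_x)\le f$, and suppose that at that moment the nearest open facility $f_{open}$ to $x$ satisfies $r_x:=d(\hat f_x,f_{open})\le f$. Let $\mathrm{cost}_x$ denote the facility-opening cost incurred while processing $x$ plus the connection cost of $x$, where $x$ is connected to $\hat f_x$ if a facility is opened there and to $f_{open}$ otherwise. Then $$\mathbb E[\mathrm{cost}_x]\le d^*(x)+r_x+\frac{r_x}{f}\,\eta_x+\Bigl(1-\frac{r_x}{f}\Bigr)\eta_{open},$$ where $d^*(x)=d(x,c^*_x)$, $\eta_x=d(\hat f_x,c^*_x)$ and $\eta_{open}=d(f_{open},c^*_x)$.
   Context: Online Facility Location with uniform facility cost $f>0$ in a metric space $(\mathcal M,d)$; a fixed optimal offline solution assigns each demand $x$ to an optimal facility $c^*_x$. Algorithm PredFL: maintain the set $\mathcal O$ of open facilities; when demand $x$ with prediction $\hat f_x$ arrives, let $f_{open}=\arg\min_{j\in\mathcal O}d(x,j)$; if $d(x,\hat f_x)>f$ open a facility at $x$; otherwise, with $r_x=d(f_{open},\hat f_x)$, open a facility at $\hat f_x$ with probability $\min\{1,r_x/f\}$. *)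

From mathcomp Require Import all_boot all_order all_algebra.
Set Implicit Arguments. Unset Strict Implicit. Unset Printing Implicit Defensive.
Import Order.TTheory GRing.Theory Num.Theory.
Local Open Scope ring_scope.

Definition is_metric (R : realFieldType) (M : Type) (d : M -> M -> R) : Prop :=
  [/\ forall x y, 0 <= d x y,
      forall x y, d x y = 0 <-> x = y,
      forall x y, d x y = d y x
    & forall x y z, d x z <= d x y + d y z].

(* Offline facility location with uniform opening cost f.
   A solution is a finite set of open facilities S (a seq, duplicates ignored)
   together with an assignment sigma of demands to facilities. *)
Definition offline_feasible (M : eqType) (demands S : seq M) (sigma : M -> M) :=
  all (fun y => sigma y \in S) demands.

Definition offline_cost (R : realFieldType) (M : eqType) (d : M -> M -> R)
  (f : R) (demands S : seq M) (sigma : M -> M) : R :=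
  f * (size (undup S))%:R + \sum_(y <- demands) d y (sigma y).

Definition offline_optimal (R : realFieldType) (M : eqType) (d : M -> M -> R)
  (f : R) (demands S : seq M) (sigma : M -> M) : Prop :=
  offline_feasible demands S sigma /\
  forall S' sigma', offline_feasible demands S' sigma' ->
    offline_cost d f demands S sigma <= offline_cost d f demands S' sigma'.

(* The random choice is a Bernoulli coin
   [opened] with success probability p = min(1, r_x / f), r_x = d(fopen, fhat).
   [predfl_step_cost ... opened] is the opening cost plus connection cost of x
   given the outcome of the coin; the expected cost averages over the coin. *)
Definition predfl_open_prob (R : realFieldType) (M : Type) (d : M -> M -> R)
  (f : R) (fhat fopen : M) : R :=
  Num.min 1 (d fopen fhat / f).

Definition predfl_step_cost (R : realFieldType) (M : Type) (d : M -> M -> R)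
  (f : R) (x fhat fopen : M) (opened : bool) : R :=
  if f < d x fhat then f (* facility opened at x itself, connection cost 0 *)
  else if opened then f + d x fhat else d x fopen.

Definition predfl_expected_cost (R : realFieldType) (M : Type) (d : M -> M -> R)
  (f : R) (x fhat fopen : M) : R :=
  if f < d x fhat then f
  else let p := predfl_open_prob d f fhat fopen in
       p * predfl_step_cost d f x fhat fopen true
       + (1 - p) * predfl_step_cost d f x fhat fopen false.

From mathcomp Require Import all_boot all_order all_algebra.
From mathcomp Require Import ring lra.
Import Order.TTheory GRing.Theory Num.Theory.
Local Open Scope ring_scope.

(* When d(x, fhat) <= f, PredFL does not open at x; it flips a
   coin with success probability p = min(1, r/f), which equals r/f because
   r = d(fhat, fopen) <= f.  Hence the expected cost is
     p (f + d(x, fhat)) + (1 - p) d(x, fopen)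
       = r + p d(x, fhat) + (1 - p) d(x, fopen),
   using p f = r.  Routing both connections through the optimal facility
   c = sigma x by the triangle inequality, and averaging with the convex
   weights p, 1 - p, bounds the last two terms by
     d(x, c) + p d(fhat, c) + (1 - p) d(fopen, c). *)

Lemma convex_comb_le {R : realFieldType} {p a a' b b' : R} :
  0 <= p <= 1 -> a <= a' -> b <= b' ->
  p * a + (1 - p) * b <= p * a' + (1 - p) * b'.
Proof.
move=> /andP[p_ge0 p_le1] le_a le_b.
have q_ge0 : 0 <= 1 - p by rewrite subr_ge0.
by rewrite lerD // ler_wpM2l.
Qed.

Section MetricFacts.
Context {R : realFieldType} {M : Type} {d : M -> M -> R}.
Hypothesis d_metric : is_metric d.

Lemma metric_sym (y z : M) : d y z = d z y.
Proof. by case: d_metric => _ _ dsym _; apply: dsym. Qed.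

(* Triangle inequality through a third point c, with both distances
   measured towards c, as the paper's d*(x), eta_x and eta_open are. *)
Lemma metric_via (y z c : M) : d y z <= d y c + d z c.
Proof. by case: d_metric => _ _ _ dtri; rewrite (metric_sym z c). Qed.

Lemma predfl_open_prob_small (f : R) (fhat fopen : M) :
  0 < f -> d fhat fopen <= f ->
  predfl_open_prob d f fhat fopen = d fhat fopen / f.
Proof.
move=> f_gt0 r_le_f; rewrite /predfl_open_prob (metric_sym fopen fhat).
by apply/min_idPr; rewrite ler_pdivrMr // mul1r.
Qed.

Lemma predfl_ratio_unit {f : R} {fhat fopen : M} :
  0 < f -> d fhat fopen <= f -> 0 <= d fhat fopen / f <= 1.
Proof.
case: d_metric => d_ge0 _ _ _ f_gt0 r_le_f.
rewrite ler_pdivrMr // mul1r r_le_f andbT.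
by rewrite divr_ge0 // ltW.
Qed.

End MetricFacts.

Lemma predfl_expected_cost_near (R : realFieldType) (M : Type)
    (d : M -> M -> R) (f : R) (x fhat fopen : M) :
  d x fhat <= f ->
  let p := predfl_open_prob d f fhat fopen in
  predfl_expected_cost d f x fhat fopen
    = p * (f + d x fhat) + (1 - p) * d x fopen.
Proof.
by move=> near; rewrite /predfl_expected_cost /predfl_step_cost ltNge near.
Qed.

Theorem mainTheorem4 (R : realFieldType) (M : eqType) (d : M -> M -> R) (f : R)
  (demands : seq M) (Sopt : seq M) (sigma : M -> M)
  (O : seq M) (x fhat fopen : M) :
  is_metric d -> 0 < f ->
  offline_optimal d f demands Sopt sigma ->
  x \in demands ->
  fopen \in O -> (forall j, j \in O -> d x fopen <= d x j) ->
  d x fhat <= f ->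
  d fhat fopen <= f ->
  let r := d fhat fopen in
  let c := sigma x in
  predfl_expected_cost d f x fhat fopen
    <= d x c + r + r / f * d fhat c + (1 - r / f) * d fopen c.
Proof.
move=> d_metric f_gt0 _ _ _ _ near r_le_f /=.
set r := d fhat fopen; set c := sigma x.
rewrite predfl_expected_cost_near //= predfl_open_prob_small //.
have p_unit := predfl_ratio_unit d_metric f_gt0 r_le_f.
have pf_r : r / f * f = r by rewrite divfK // gt_eqF.
have routed := convex_comb_le p_unit
  (metric_via d_metric x fhat c) (metric_via d_metric x fopen c).
rewrite mulrDr pf_r.
set p := r / f in routed *.
have split_dxc : p * (d x c + d fhat c) + (1 - p) * (d x c + d fopen c)
    = d x c + p * d fhat c + (1 - p) * d fopen c by ring.
lra.
Qed.
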